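(* For every integer $n\geq2$, $\mathcal{N}^{\perp}\cap HC(W_n^{*})=\varnothing$.
   Context: $H^2$ denotes the Hardy space of analytic functions $f(z)=\sum_{j\ge0}\hat f(j)z^j$ on the open unit disk $\mathbb{D}$ with $\sum_{j}|\hat f(j)|^2<\infty$. For $n\in\mathbb{N}$, $W_n$ is the bounded operator on $H^2$ given by $W_nf(z)=(1+z+\cdots+z^{n-1})f(z^n)$, $W_n^{*}$ is its adjoint, and $HC(W_n^{*})$ is the set of vectors with dense orbit under $W_n^{*}$. For each integer $k\geq2$, $h_k(z)=\frac{1}{1-z}\log\left(\frac{1+z+\cdots+z^{k-1}}{k}\right)$ (holomorphic branch of the logarithm on $\mathbb{D}$, real at $z=0$), which lies in $H^2$; $\mathcal{N}=\mathrm{span}\{h_k:k\geq2\}$ and $\mathcal{N}^\perp$ is its orthogonal complement in $H^2$. *)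

From Stdlib Require Import Reals List.
From Coquelicot Require Import Coquelicot.
Open Scope R_scope.

(* Elements of H^2 are represented by their Taylor coefficient sequences. *)
Definition seqC := nat -> C.

Definition Cexp (w : C) : C :=
  (exp (Re w) * cos (Im w), exp (Re w) * sin (Im w)).

Definition inH2 (a : seqC) : Prop :=
  ex_series (fun j => (Cmod (a j)) ^ 2).

Definition is_eval (a : seqC) (z : C) (s : C) : Prop :=
  @is_series C_AbsRing C_NormedModule (fun j => Cmult (a j) (pow_n z j)) s.

Definition inDisk (z : C) : Prop := Cmod z < 1.

Definition geomC (n : nat) (z : C) : C :=
  @sum_n C_AbelianGroup (fun i => pow_n z i) (n - 1).

Definition is_inner (a b : seqC) (l : C) : Prop :=
  @is_series C_AbsRing C_NormedModule (fun j => Cmult (a j) (Cconj (b j))) l.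

Definition W_rel (n : nat) (f g : seqC) : Prop :=
  inH2 g /\
  forall z, inDisk z -> exists s t,
    is_eval g z s /\ is_eval f (pow_n z n) t /\ s = Cmult (geomC n z) t.

Definition is_adjoint_Wn (n : nat) (T : seqC -> seqC) : Prop :=
  (forall g, inH2 g -> inH2 (T g)) /\
  (forall f Wf g, inH2 f -> W_rel n f Wf -> inH2 g ->
     exists l, is_inner Wf g l /\ is_inner f (T g) l).

Definition HC (T : seqC -> seqC) (x : seqC) : Prop :=
  inH2 x /\
  forall y, inH2 y -> forall eps, 0 < eps ->
    exists m s, is_series (fun j => (Cmod (Nat.iter m T x j - y j)) ^ 2) s
                /\ sqrt s < eps.

(* a is (the coefficient sequence of) h_k: the H^2 function
   (1/(1-z)) log((1+...+z^(k-1))/k), the holomorphic branch of the log on D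
   real at 0; i.e. exp((1-z) h_k(z)) = (1+...+z^(k-1))/k on D, h_k(0) real. *)
Definition is_hk (k : nat) (a : seqC) : Prop :=
  inH2 a /\ Im (a 0%nat) = 0 /\
  forall z, inDisk z -> exists s,
    is_eval a z s /\
    Cexp (Cmult (Cminus 1 z) s) = Cmult (geomC k z) (RtoC (/ INR k)).

Definition inN (g : seqC) : Prop :=
  exists (l : list (C * nat * seqC)),
    (forall c k a, In (c, k, a) l -> (2 <= k)%nat /\ is_hk k a) /\
    forall j, g j = fold_right (fun t acc => let '(c, _, a) := t in Cplus (Cmult c (a j)) acc) (RtoC 0) l.

Definition inNperp (f : seqC) : Prop :=
  inH2 f /\ forall g, inN g -> is_inner g f (RtoC 0).

From Stdlib Require Import Reals Lra Lia Psatz List.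
From Coquelicot Require Import Coquelicot.
Open Scope R_scope.

(* Both [W_n] and [h_k] are explicit on Taylor coefficients. [W_n g] has coefficients
   [g(m / n)], and [(1 - z) h_k(z) = - ln k + L(z) - L(z^k)] with
   [L(w) = - log (1 - w) = \sum_(j >= 1) w^j / j] shows that [h_k] has coefficients
   [H_m - H_(m / k) - ln k], [H_m] the harmonic numbers. Hence [W_n h_k = h_(n k) - h_n]:
   the span of the [h_k] is [W_n]-invariant, so its orthogonal complement is
   [W_n^*]-invariant. An orbit starting there stays orthogonal to [h_n], and
   [|x - h_n|^2 = |x|^2 + |h_n|^2 >= |h_n(0)|^2 = (ln n)^2] for such [x]: the orbit
   never comes within [ln n] of [h_n]. *)

Lemma sum_n_fst (a : nat -> C) N :
  fst (@sum_n C_AbelianGroup a N) = sum_n (fun n => fst (a n)) N.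
Proof.
  induction N as [|N IH].
  - now rewrite !sum_O.
  - now rewrite !sum_Sn, <- IH.
Qed.

Lemma sum_n_snd (a : nat -> C) N :
  snd (@sum_n C_AbelianGroup a N) = sum_n (fun n => snd (a n)) N.
Proof.
  induction N as [|N IH].
  - now rewrite !sum_O.
  - now rewrite !sum_Sn, <- IH.
Qed.

Lemma is_series_fst (a : nat -> C) l :
  @is_series C_AbsRing C_NormedModule a l -> is_series (fun n => fst (a n)) (fst l).
Proof.
  intros H. unfold is_series.
  apply (filterlim_ext (fun N => fst (sum_n a N))); [intro N; apply sum_n_fst |].
  eapply filterlim_comp; [exact H |].
  intros P [e He]. exists e. intros y Hy. apply He, Hy.
Qed.

Lemma is_series_snd (a : nat -> C) l :
  @is_series C_AbsRing C_NormedModule a l -> is_series (fun n => snd (a n)) (snd l).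
Proof.
  intros H. unfold is_series.
  apply (filterlim_ext (fun N => snd (sum_n a N))); [intro N; apply sum_n_snd |].
  eapply filterlim_comp; [exact H |].
  intros P [e He]. exists e. intros y Hy. apply He, Hy.
Qed.

Lemma is_series_C_unique (a : nat -> C) l1 l2 :
  @is_series C_AbsRing C_NormedModule a l1 ->
  @is_series C_AbsRing C_NormedModule a l2 -> l1 = l2.
Proof. exact (filterlim_locally_unique _ _ _). Qed.

Section CLimits.

Context {T : Type} {F : (T -> Prop) -> Prop} {FF : Filter F}.

Lemma filterlim_Cplus (f g : T -> C) a b :
  filterlim f F (locally a) -> filterlim g F (locally b) ->
  filterlim (fun x => Cplus (f x) (g x)) F (locally (Cplus a b)).
Proof.
  intros Hf Hg. apply (filterlim_comp_2 f g (fun x y => @plus C_NormedModule x y) Hf Hg).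
  apply (filterlim_plus (V := C_NormedModule)).
Qed.

Lemma filterlim_Cminus (f g : T -> C) a b :
  filterlim f F (locally a) -> filterlim g F (locally b) ->
  filterlim (fun x => Cminus (f x) (g x)) F (locally (Cminus a b)).
Proof.
  intros Hf Hg. apply filterlim_Cplus; [exact Hf |].
  eapply filterlim_comp; [exact Hg | apply (filterlim_opp (V := C_NormedModule))].
Qed.

Lemma filterlim_Cmult_l (f : T -> C) a c :
  filterlim f F (locally a) -> filterlim (fun x => Cmult c (f x)) F (locally (Cmult c a)).
Proof.
  intros Hf. eapply filterlim_comp; [exact Hf | apply (filterlim_scal_r (V := C_NormedModule))].
Qed.

Lemma filterlim_C_0_bound (f : T -> C) (g : T -> R) :
  (forall x, Cmod (f x) <= g x) -> filterlim g F (locally 0) ->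
  filterlim f F (locally (RtoC 0)).
Proof.
  intros Hb Hg. apply (filterlim_locally (U := C_UniformSpace)). intro eps.
  eapply filter_imp; [| exact (proj1 (filterlim_locally g 0) Hg eps)].
  intros x Hx. apply (norm_compat1 (V := C_NormedModule)).
  change (Cmod (Cminus (f x) 0) < eps). replace (Cminus (f x) 0) with (f x) by ring.
  change (Rabs (g x - 0) < eps) in Hx. apply Rabs_def2 in Hx.
  pose proof (Hb x). lra.
Qed.

End CLimits.

Section NonnegSeries.

Variable a : nat -> R.
Hypothesis a_ge0 : forall n, 0 <= a n.

Lemma sum_n_ge0 N : 0 <= sum_n a N.
Proof.
  induction N as [|N IH].
  - rewrite sum_O. apply a_ge0.
  - rewrite sum_Sn. pose proof (a_ge0 (S N)). unfold plus; simpl. lra.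
Qed.

Lemma sum_n_le_sum_n N M : (N <= M)%nat -> sum_n a N <= sum_n a M.
Proof.
  induction 1 as [|M _ IH]; [lra |].
  rewrite sum_Sn. pose proof (a_ge0 (S M)). unfold plus; simpl. lra.
Qed.

Lemma term_le_sum_n j : a j <= sum_n a j.
Proof.
  destruct j as [|j].
  - rewrite sum_O. lra.
  - rewrite sum_Sn. pose proof (sum_n_ge0 j). unfold plus; simpl. lra.
Qed.

Lemma ex_series_bounded_partial M : (forall N, sum_n a N <= M) -> ex_series a.
Proof.
  intros HM.
  destruct (ex_finite_lim_seq_incr (sum_n a) M) as [l Hl]; [| exact HM |].
  - intro N. apply sum_n_le_sum_n. lia.
  - now exists l.
Qed.

Lemma is_series_partial_le l N : is_series a l -> sum_n a N <= l.
Proof.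
  intros Hl.
  change (Rbar_le (sum_n a N) l).
  apply (is_lim_seq_le_loc (fun _ => sum_n a N) (sum_n a)); [| apply is_lim_seq_const | exact Hl].
  exists N. apply sum_n_le_sum_n.
Qed.

Lemma is_series_term_le l j : is_series a l -> a j <= l.
Proof.
  intros Hl. pose proof (term_le_sum_n j). pose proof (is_series_partial_le l j Hl). lra.
Qed.

End NonnegSeries.

(** * The Hardy space and [W_n] *)

Lemma Cmod_pow_n (w : C) j : Cmod (pow_n w j) = Cmod w ^ j.
Proof. exact (Cmod_pow w j). Qed.

Lemma pow_n_mul (z : C) n j : pow_n z (n * j) = pow_n (pow_n z n) j.
Proof. exact (Cpow_mult_r z n j). Qed.

Lemma ex_series_geom_bound (a : nat -> C) (B r : R) :
  Rabs r < 1 -> (forall n, Cmod (a n) <= B * r ^ n) ->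
  @ex_series C_AbsRing C_NormedModule a.
Proof.
  intros Hr Ha.
  apply (@ex_series_le C_AbsRing C_CompleteNormedModule _ (fun n => B * r ^ n)); [exact Ha |].
  apply (ex_series_scal_l (V := R_NormedModule) B), ex_series_geom, Hr.
Qed.

Lemma inH2_coef_bounded (g : seqC) : inH2 g -> exists B, forall j, Cmod (g j) <= B.
Proof.
  intros [l Hl]. exists (1 + l). intro j.
  assert (Hsq := is_series_term_le _ (fun n => pow2_ge_0 _) l j Hl).
  pose proof (Cmod_ge_0 (g j)). nra.
Qed.

Lemma ex_eval_disk (g : seqC) w : inH2 g -> Cmod w < 1 -> exists s, is_eval g w s.
Proof.
  intros Hg Hw. destruct (inH2_coef_bounded g Hg) as [B HB].
  apply (ex_series_geom_bound _ B (Cmod w)).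
  - rewrite Rabs_pos_eq; [exact Hw | apply Cmod_ge_0].
  - intro n. rewrite Cmod_mult, Cmod_pow_n.
    apply Rmult_le_compat_r; [apply pow_le, Cmod_ge_0 | apply HB].
Qed.

Lemma inH2_ext (a b : seqC) : (forall j, a j = b j) -> inH2 a -> inH2 b.
Proof.
  intros Hab [l Hl]. exists l.
  apply (is_series_ext _ _ _ (fun j => f_equal (fun c => Cmod c ^ 2) (Hab j)) Hl).
Qed.

Lemma inH2_zero : inH2 (fun _ => RtoC 0).
Proof.
  assert (E : forall j : nat, Cmod (RtoC 0) ^ 2 = 0) by (intro; rewrite Cmod_0; ring).
  apply (ex_series_bounded_partial _ (fun j => pow2_ge_0 _) 0). intro N.
  rewrite (sum_n_ext _ _ _ E), sum_n_const. lra.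
Qed.

Lemma inH2_lincomb (c : C) (a b : seqC) :
  inH2 a -> inH2 b -> inH2 (fun j => Cplus (Cmult c (a j)) (b j)).
Proof.
  intros Ha Hb.
  apply (@ex_series_le R_AbsRing R_CompleteNormedModule _
           (fun j => 2 * Cmod c ^ 2 * Cmod (a j) ^ 2 + 2 * Cmod (b j) ^ 2)).
  - intro j. change (norm ?x) with (Rabs x). rewrite Rabs_pos_eq by apply pow2_ge_0.
    pose proof (Cmod_triangle (Cmult c (a j)) (b j)) as Htri. rewrite Cmod_mult in Htri.
    set (u := Cmod c * Cmod (a j)) in Htri. set (v := Cmod (b j)) in *.
    pose proof (Cmod_ge_0 (Cplus (Cmult c (a j)) (b j))).
    replace (2 * Cmod c ^ 2 * Cmod (a j) ^ 2) with (2 * u ^ 2) by (unfold u; ring).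
    assert (Cmod (Cplus (Cmult c (a j)) (b j)) ^ 2 <= (u + v) ^ 2) by (apply pow_incr; lra).
    pose proof (pow2_ge_0 (u - v)). nra.
  - apply (ex_series_plus (V := R_NormedModule)).
    + apply (ex_series_scal_l (V := R_NormedModule) (2 * Cmod c ^ 2)), Ha.
    + apply (ex_series_scal_l (V := R_NormedModule) 2), Hb.
Qed.

Definition W_seq (n : nat) (g : seqC) : seqC := fun m => g (m / n)%nat.

Lemma div_block n j r : (r < n)%nat -> ((n * j + r) / n = j)%nat.
Proof.
  intro Hr. rewrite Nat.mul_comm, Nat.add_comm, Nat.div_add by lia.
  rewrite Nat.div_small by lia. lia.
Qed.

Lemma sum_n_add_succ {G : AbelianMonoid} (F : nat -> G) a b :
  sum_n F (a + S b) = plus (sum_n F a) (sum_n (fun r => F (a + S r)%nat) b).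
Proof.
  induction b as [|b IH].
  - rewrite sum_O, Nat.add_1_r. apply sum_Sn.
  - rewrite Nat.add_succ_r, sum_Sn, IH, sum_Sn, plus_assoc. now rewrite <- Nat.add_succ_r.
Qed.

Lemma sum_n_blocks {G : AbelianMonoid} (F : nat -> G) n J : (1 <= n)%nat ->
  sum_n F (n * J + (n - 1)) = sum_n (fun j => sum_n (fun r => F (n * j + r)%nat) (n - 1)) J.
Proof.
  intro Hn. induction J as [|J IH].
  - now rewrite sum_O, Nat.mul_0_r.
  - replace (n * S J + (n - 1))%nat with (n * J + (n - 1) + S (n - 1))%nat by lia.
    rewrite sum_n_add_succ, IH, sum_Sn. f_equal.
    apply sum_n_ext. intro r. f_equal. lia.
Qed.

Lemma inH2_W_seq n g : (1 <= n)%nat -> inH2 g -> inH2 (W_seq n g).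
Proof.
  intros Hn [G HG].
  apply (ex_series_bounded_partial _ (fun j => pow2_ge_0 _) (INR n * G)). intro N.
  apply Rle_trans with (sum_n (fun m => Cmod (W_seq n g m) ^ 2) (n * N + (n - 1))).
  { apply sum_n_le_sum_n; [intro; apply pow2_ge_0 | nia]. }
  rewrite sum_n_blocks by lia.
  rewrite (sum_n_ext _ (fun j => INR n * Cmod (g j) ^ 2)).
  - rewrite (sum_n_mult_l (K := R_Ring)).
    apply Rmult_le_compat_l; [apply pos_INR |].
    apply (is_series_partial_le _ (fun j => pow2_ge_0 _) _ _ HG).
  - intro j. rewrite (sum_n_ext_loc _ (fun _ => Cmod (g j) ^ 2)).
    + rewrite sum_n_const. f_equal. f_equal. lia.
    + intros r Hr. unfold W_seq. now rewrite div_block by lia.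
Qed.

Lemma W_rel_W_seq n g : (1 <= n)%nat -> inH2 g -> W_rel n g (W_seq n g).
Proof.
  intros Hn Hg. split; [now apply inH2_W_seq |].
  intros z Hz. unfold inDisk in Hz.
  assert (Hzn : Cmod (pow_n z n) < 1).
  { rewrite Cmod_pow_n. apply pow_lt_1_compat; [split; [apply Cmod_ge_0 | exact Hz] | lia]. }
  destruct (ex_eval_disk (W_seq n g) z (inH2_W_seq n g Hn Hg) Hz) as [s Hs].
  destruct (ex_eval_disk g (pow_n z n) Hg Hzn) as [t Ht].
  exists s, t. split; [exact Hs | split; [exact Ht |]].
  apply (filterlim_locally_unique (F := eventually)
           (fun J => sum_n (fun m => Cmult (W_seq n g m) (pow_n z m)) (n * J + (n - 1)))).
  - eapply filterlim_comp; [| exact Hs].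
    intros P [N HN]. exists N. intros J HJ. apply HN. nia.
  - apply (filterlim_ext (sum_n (fun j => scal (geomC n z) (Cmult (g j) (pow_n (pow_n z n) j))))).
    2: exact (is_series_scal_l (V := C_NormedModule) _ _ _ Ht).
    intro J. rewrite sum_n_blocks by lia. apply sum_n_ext. intro j.
    rewrite (sum_n_ext_loc _ (fun r => mult (Cmult (g j) (pow_n (pow_n z n) j)) (pow_n z r))).
    + rewrite (sum_n_mult_l (K := C_Ring)). apply Cmult_comm.
    + intros r Hr. unfold W_seq. rewrite div_block, pow_n_plus, pow_n_mul by lia.
      change (mult ?a ?b) with (Cmult a b).
      match goal with |- ?x = ?y => change (@eq C x y) end. ring.
Qed.

(** * The coefficients of [h_k] *)

Fixpoint harm (m : nat) : R :=
  match m with O => 0 | S p => harm p + / INR (S p) end.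

Definition hk_coef (k m : nat) : R := harm m - harm (m / k) - ln (INR k).

Definition hk (k : nat) : seqC := fun m => RtoC (hk_coef k m).

Lemma hk_coef_mul n k m : (1 <= n)%nat -> (1 <= k)%nat ->
  hk_coef (n * k) m - hk_coef n m = hk_coef k (m / n).
Proof.
  intros Hn Hk. unfold hk_coef.
  rewrite <- Nat.Div0.div_div, mult_INR, ln_mult by (apply lt_0_INR; lia). ring.
Qed.

Lemma ln_le_sub_1 x : 0 < x -> ln x <= x - 1.
Proof. intro Hx. pose proof (exp_ineq1_le (ln x)). rewrite exp_ln in H by exact Hx. lra. Qed.

Lemma one_sub_inv_le_ln x : 0 < x -> 1 - / x <= ln x.
Proof.
  intro Hx. pose proof (ln_le_sub_1 (/ x) (Rinv_0_lt_compat _ Hx)).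
  rewrite ln_Rinv in H by exact Hx. lra.
Qed.

Lemma harm_bounds m : 0 <= harm m <= INR m.
Proof.
  induction m as [|m IH]; [simpl; lra |].
  change (harm (S m)) with (harm m + / INR (S m)). rewrite S_INR. pose proof (pos_INR m).
  assert (0 < / (INR m + 1) <= 1).
  { split; [apply Rinv_0_lt_compat; lra |].
    rewrite <- Rinv_1. apply Rinv_le_contravar; lra. }
  lra.
Qed.

Lemma ln_succ_sub_bounds x : 0 < x -> / (x + 1) <= ln (x + 1) - ln x <= / x.
Proof.
  intro Hx. rewrite <- ln_div by lra.
  assert (Hpos : 0 < (x + 1) / x) by (apply Rdiv_lt_0_compat; lra).
  pose proof (ln_le_sub_1 _ Hpos). pose proof (one_sub_inv_le_ln _ Hpos).
  replace ((x + 1) / x - 1) with (/ x) in * by (field; lra).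
  replace (1 - / ((x + 1) / x)) with (/ (x + 1)) in * by (field; lra).
  lra.
Qed.

Lemma harm_sub_bounds q m : (1 <= q)%nat -> (q <= m)%nat ->
  ln (INR m + 1) - ln (INR q + 1) <= harm m - harm q <= ln (INR m) - ln (INR q).
Proof.
  intros Hq. induction 1 as [|m Hqm IH]; [lra |].
  change (harm (S m)) with (harm m + / INR (S m)). rewrite !S_INR.
  assert (Hm : 1 <= INR m) by (apply (le_INR 1); lia).
  pose proof (ln_succ_sub_bounds (INR m) ltac:(lra)).
  pose proof (ln_succ_sub_bounds (INR m + 1) ltac:(lra)).
  lra.
Qed.

Lemma hk_coef_decay_small k m : (2 <= k)%nat -> (m < k)%nat ->
  Rabs (hk_coef k m) * (INR m + 1) <= INR k ^ 2.
Proof.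
  intros Hk Hmk. unfold hk_coef. rewrite Nat.div_small by exact Hmk. simpl harm.
  assert (HK : 2 <= INR k) by (apply (le_INR 2); lia).
  assert (HmK : INR m + 1 <= INR k) by (rewrite <- S_INR; apply le_INR; lia).
  assert (Hln : 0 < ln (INR k) <= INR k - 1).
  { split; [rewrite <- ln_1; apply ln_increasing; lra | apply ln_le_sub_1; lra]. }
  pose proof (harm_bounds m). pose proof (pos_INR m).
  assert (Rabs (harm m - 0 - ln (INR k)) <= INR k) by (apply Rabs_le; lra).
  pose proof (Rabs_pos (harm m - 0 - ln (INR k))). nra.
Qed.

(* For [m = k q + r] with [0 <= r < k], [ln (m / (k q))] and [ln ((m + 1) / (k (q + 1)))]
   are [O(k / m)]. *)
Lemma ln_block_defect_bound (c K Q r : R) :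
  2 <= K -> 1 <= Q -> 0 <= r -> r + 1 <= K ->
  ln (K * Q + r + 1) - ln (Q + 1) - ln K <= c <= ln (K * Q + r) - ln Q - ln K ->
  Rabs c * (K * Q + r + 1) <= K ^ 2.
Proof.
  intros HK HQ Hr HrK [Hlo Hhi].
  set (M := K * Q + r) in *. assert (EM : M = K * Q + r) by reflexivity. clearbody M.
  assert (HKQ : 0 < K * Q) by nra.
  assert (Hc_up : c * (M + 1) <= 2 * K).
  { assert (Hx : c <= M / (K * Q) - 1).
    { apply Rle_trans with (ln (M / (K * Q))); [| apply ln_le_sub_1, Rdiv_lt_0_compat; nra].
      rewrite ln_div, ln_mult by nra. lra. }
    set (x := M / (K * Q) - 1) in Hx.
    assert (Ex : x * (K * Q) = r) by (unfold x; rewrite EM; field; lra).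
    assert (c * (M + 1) <= x * (M + 1)) by (apply Rmult_le_compat_r; nra).
    enough (x * (M + 1) <= 2 * K) by lra.
    apply Rmult_le_reg_r with (K * Q); [exact HKQ |].
    replace (x * (M + 1) * (K * Q)) with (r * (M + 1)) by (rewrite <- Ex; ring).
    nra. }
  assert (Hc_lo : - K <= c * (M + 1)).
  { assert (Hx : 1 - / ((M + 1) / (K * (Q + 1))) <= c).
    { apply Rle_trans with (ln ((M + 1) / (K * (Q + 1))));
        [apply one_sub_inv_le_ln, Rdiv_lt_0_compat; nra |].
      rewrite ln_div, ln_mult by nra. lra. }
    replace (1 - / ((M + 1) / (K * (Q + 1)))) with ((M + 1 - K * (Q + 1)) / (M + 1)) in Hx
      by (field; nra).
    apply Rmult_le_compat_r with (r := M + 1) in Hx; [| nra].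
    replace ((M + 1 - K * (Q + 1)) / (M + 1) * (M + 1)) with (M + 1 - K * (Q + 1)) in Hx
      by (field; nra).
    nra. }
  rewrite <- (Rabs_pos_eq (M + 1)), <- Rabs_mult by nra.
  apply Rabs_le. nra.
Qed.

Lemma hk_coef_decay_large k m : (2 <= k)%nat -> (k <= m)%nat ->
  Rabs (hk_coef k m) * (INR m + 1) <= INR k ^ 2.
Proof.
  intros Hk Hkm. set (q := (m / k)%nat).
  assert (Hq : (1 <= q)%nat) by (apply Nat.div_le_lower_bound; lia).
  assert (Hqm : (q <= m)%nat) by (apply Nat.Div0.div_le_upper_bound; nia).
  assert (Em : INR m = INR k * INR q + INR (m mod k)).
  { rewrite <- mult_INR, <- plus_INR. f_equal. apply Nat.div_mod. lia. }
  destruct (harm_sub_bounds q m Hq Hqm) as [Hlo Hhi].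
  rewrite Em in *. apply ln_block_defect_bound.
  - apply (le_INR 2). lia.
  - apply (le_INR 1). lia.
  - apply pos_INR.
  - rewrite <- S_INR. apply le_INR. apply Nat.mod_upper_bound. lia.
  - unfold hk_coef. fold q. lra.
Qed.

Lemma hk_coef_decay k m : (2 <= k)%nat -> Rabs (hk_coef k m) * (INR m + 1) <= INR k ^ 2.
Proof.
  intro Hk. destruct (Nat.lt_ge_cases m k).
  - now apply hk_coef_decay_small.
  - now apply hk_coef_decay_large.
Qed.

Lemma ex_series_inv_sq : ex_series (fun m => / (INR m + 1) ^ 2).
Proof.
  assert (Hpos : forall m, 0 < INR m + 1) by (intro m; pose proof (pos_INR m); lra).
  apply (ex_series_bounded_partial _ (fun m => Rlt_le _ _ (Rinv_0_lt_compat _ (pow_lt _ 2 (Hpos m)))) 2).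
  enough (H : forall N, sum_n (fun m => / (INR m + 1) ^ 2) N <= 2 - / (INR N + 1)).
  { intro N. pose proof (Rinv_0_lt_compat _ (Hpos N)). specialize (H N). lra. }
  induction N as [|N IH].
  - rewrite sum_O. simpl. lra.
  - rewrite sum_Sn. change (plus ?a ?b) with (a + b). rewrite S_INR.
    pose proof (Hpos N).
    assert (/ (INR N + 1 + 1) ^ 2 <= / (INR N + 1) - / (INR N + 1 + 1)).
    { replace (/ (INR N + 1) - / (INR N + 1 + 1)) with (/ ((INR N + 1) * (INR N + 1 + 1)))
        by (field; lra).
      apply Rinv_le_contravar; nra. }
    lra.
Qed.

Lemma inH2_hk k : (2 <= k)%nat -> inH2 (hk k).
Proof.
  intro Hk.
  apply (@ex_series_le R_AbsRing R_CompleteNormedModule _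
           (fun m => INR k ^ 4 * / (INR m + 1) ^ 2)).
  - intro m. change (norm ?x) with (Rabs x). unfold hk. rewrite Cmod_R.
    rewrite Rabs_pos_eq by apply pow2_ge_0.
    assert (Hm : 0 < INR m + 1) by (pose proof (pos_INR m); lra).
    pose proof (hk_coef_decay k m Hk). pose proof (Rabs_pos (hk_coef k m)).
    replace (INR k ^ 4 * / (INR m + 1) ^ 2) with ((INR k ^ 2 / (INR m + 1)) ^ 2) by (field; lra).
    apply pow_incr. split; [lra |].
    apply Rmult_le_reg_r with (INR m + 1); [exact Hm |].
    unfold Rdiv. rewrite Rmult_assoc, Rinv_l, Rmult_1_r by lra. exact H.
  - apply (ex_series_scal_l (V := R_NormedModule) (INR k ^ 4)), ex_series_inv_sq.
Qed.

(** * The logarithm series *)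

Lemma Cexp_plus a b : Cexp (Cplus a b) = Cmult (Cexp a) (Cexp b).
Proof.
  unfold Cexp, Re, Im. apply injective_projections; simpl; rewrite exp_plus;
    [rewrite cos_plus | rewrite sin_plus]; ring.
Qed.

Lemma Cexp_0 : Cexp (RtoC 0) = RtoC 1.
Proof.
  unfold Cexp, Re, Im. simpl. rewrite exp_0, cos_0, sin_0.
  apply injective_projections; simpl; ring.
Qed.

Lemma Cexp_opp_mul a : Cmult (Cexp (Copp a)) (Cexp a) = RtoC 1.
Proof.
  rewrite <- Cexp_plus, <- Cexp_0. f_equal.
  apply injective_projections; simpl; ring.
Qed.

Lemma Cexp_opp_ln K : 0 < K -> Cexp (RtoC (- ln K)) = RtoC (/ K).
Proof.
  intro HK. unfold Cexp, Re, Im. simpl. rewrite cos_0, sin_0, exp_Ropp, exp_ln by exact HK.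
  apply injective_projections; simpl; ring.
Qed.

Definition log_term (w : C) (j : nat) : C := Cmult (pow_n w (S j)) (RtoC (/ INR (S j))).

Lemma inv_INR_S_bounds j : 0 < / INR (S j) <= 1.
Proof.
  rewrite S_INR. pose proof (pos_INR j). split; [apply Rinv_0_lt_compat; lra |].
  rewrite <- Rinv_1. apply Rinv_le_contravar; lra.
Qed.

Lemma ex_series_log_term w : Cmod w < 1 -> @ex_series C_AbsRing C_NormedModule (log_term w).
Proof.
  intro Hw. apply (ex_series_geom_bound _ 1 (Cmod w)).
  - rewrite Rabs_pos_eq; [exact Hw | apply Cmod_ge_0].
  - intro n. unfold log_term. rewrite Cmod_mult, Cmod_pow_n, Cmod_R.
    pose proof (inv_INR_S_bounds n). rewrite Rabs_pos_eq by lra.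
    pose proof (Cmod_ge_0 w). pose proof (pow_le _ n (Cmod_ge_0 w)).
    change (Cmod w ^ S n) with (Cmod w * Cmod w ^ n).
    assert (Cmod w * / INR (S n) <= 1) by nra. nra.
Qed.

Lemma is_series_geom_C q c : Cmod q < 1 ->
  exists rho, @is_series C_AbsRing C_NormedModule (fun n => Cmult (pow_n q n) c) rho /\
              Cmult (Cminus 1 q) rho = c.
Proof.
  intro Hq.
  destruct (ex_series_geom_bound (fun n => Cmult (pow_n q n) c) (Cmod c) (Cmod q)) as [rho Hrho].
  { rewrite Rabs_pos_eq; [exact Hq | apply Cmod_ge_0]. }
  { intro n. rewrite Cmod_mult, Cmod_pow_n. lra. }
  change C in rho. exists rho. split; [exact Hrho |].
  assert (Hshift : @is_series C_AbsRing C_NormedModule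
                     (fun n => Cmult (pow_n q (S n)) c) (Cminus rho c)).
  { apply (is_series_incr_1 (fun n => Cmult (pow_n q n) c)).
    match goal with |- is_series _ ?L => replace L with rho; [exact Hrho |] end.
    change (@eq C rho (Cplus (Cminus rho c) (Cmult 1 c))). ring. }
  assert (Hmul : @is_series C_AbsRing C_NormedModule
                   (fun n => Cmult (pow_n q (S n)) c) (Cmult q rho)).
  { apply (is_series_ext (fun n => scal q (Cmult (pow_n q n) c))).
    - intro n. change (@eq C (Cmult q (Cmult (pow_n q n) c)) (Cmult (Cmult q (pow_n q n)) c)). ring.
    - exact (is_series_scal_l (V := C_NormedModule) q _ _ Hrho). }
  pose proof (is_series_C_unique _ _ _ Hshift Hmul) as E.
  transitivity (Cminus rho (Cmult q rho)); [ring |]. rewrite <- E. ring.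
Qed.

Lemma CV_radius_gt_1 (a : nat -> R) r : 0 <= r < 1 -> (forall n, Rabs (a n) <= r ^ n) ->
  Rbar_lt 1 (CV_radius a).
Proof.
  intros Hr Ha. set (rho := 2 / (1 + r)).
  assert (Hrho : 1 < rho) by (unfold rho; apply Rlt_div_r; lra).
  assert (Hrrho : 0 <= r * rho <= 1).
  { unfold rho. split; [apply Rmult_le_pos; [lra | apply Rdiv_le_0_compat; lra] |].
    replace (r * (2 / (1 + r))) with (2 * r / (1 + r)) by (field; lra).
    apply Rle_div_l; lra. }
  apply Rbar_lt_le_trans with rho; [exact Hrho |].
  apply (proj1 (CV_radius_bounded a)). exists 1. intro n.
  rewrite Rabs_mult, <- RPow_abs, (Rabs_pos_eq rho) by lra.
  apply Rle_trans with (r ^ n * rho ^ n).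
  - apply Rmult_le_compat_r; [apply pow_le; lra | apply Ha].
  - rewrite <- Rpow_mult_distr, <- (pow1 n). apply pow_incr. exact Hrrho.
Qed.

Section LogComponent.

Variable pr : C -> R.
Hypothesis pr_scal : forall (a : R) (c : C), pr (Cmult (RtoC a) c) = a * pr c.
Hypothesis pr_le_Cmod : forall c, Rabs (pr c) <= Cmod c.
Hypothesis is_series_pr : forall (a : nat -> C) l,
  @is_series C_AbsRing C_NormedModule a l -> is_series (fun n => pr (a n)) (pr l).

Variable w : C.
Hypothesis w_lt_1 : Cmod w < 1.

(* [PSeries log_coef t] is the component [pr] of [L(t w)]. *)
Definition log_coef (n : nat) : R :=
  match n with O => 0 | S p => pr (pow_n w (S p)) * / INR (S p) end.

Lemma CV_radius_log_coef : Rbar_lt 1 (CV_radius log_coef).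
Proof.
  apply (CV_radius_gt_1 _ (Cmod w)); [split; [apply Cmod_ge_0 | exact w_lt_1] |].
  intros [|n]; cbn [log_coef].
  - rewrite Rabs_R0. simpl. lra.
  - rewrite Rabs_mult, <- Cmod_pow_n. pose proof (inv_INR_S_bounds n).
    rewrite (Rabs_pos_eq (/ _)) by lra.
    pose proof (pr_le_Cmod (pow_n w (S n))). pose proof (Rabs_pos (pr (pow_n w (S n)))).
    nra.
Qed.

Lemma PSeries_log_coef_1 L :
  @is_series C_AbsRing C_NormedModule (log_term w) L -> PSeries log_coef 1 = pr L.
Proof.
  intros HL. apply is_pseries_unique. unfold is_pseries.
  apply (is_series_ext log_coef).
  { intro k. rewrite pow_n_pow, pow1. symmetry. apply Rmult_1_l. }
  apply is_series_decr_1. change (plus (pr L) (opp (log_coef 0))) with (pr L + - 0).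
  rewrite Ropp_0, Rplus_0_r.
  apply (is_series_ext (fun n => pr (log_term w n))); [| exact (is_series_pr _ _ HL)].
  intro n. unfold log_term. rewrite Cmult_comm, pr_scal. apply Rmult_comm.
Qed.

Lemma is_derive_PSeries_log_coef t rho : 0 <= t <= 1 ->
  @is_series C_AbsRing C_NormedModule (fun n => Cmult (pow_n (Cmult (RtoC t) w) n) w) rho ->
  is_derive (PSeries log_coef) t (pr rho).
Proof.
  intros Ht Hrho.
  replace (pr rho) with (PSeries (PS_derive log_coef) t).
  { apply is_derive_PSeries. eapply Rbar_le_lt_trans; [| exact CV_radius_log_coef].
    simpl. apply Rabs_le. lra. }
  apply is_pseries_unique. unfold is_pseries.
  apply (is_series_ext (fun n => pr (Cmult (pow_n (Cmult (RtoC t) w) n) w))); [| exact (is_series_pr _ _ Hrho)].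
  intro k. change (pow_n (Cmult (RtoC t) w) k) with (Cpow (Cmult (RtoC t) w) k).
  rewrite Cpow_mult_l, <- RtoC_pow, <- Cmult_assoc, pr_scal.
  rewrite (Cmult_comm (Cpow w k) w). change (Cmult w (Cpow w k)) with (pow_n w (S k)).
  unfold PS_derive. cbn [log_coef]. change (scal ?a ?b) with (a * b).
  change (@eq R (t ^ k * pr (pow_n w (S k)))
    (t ^ k * (INR (S k) * (pr (pow_n w (S k)) * / INR (S k))))).
  field. apply not_0_INR. lia.
Qed.

End LogComponent.

(* [t |-> Cexp (u t + i v t) * (1 - t w)] has derivative
   [Cexp (u + i v) * ((1 - t w) (u' + i v') - w) = 0]. *)
Lemma Cexp_segment_const (u v : R -> R) (w : C) :
  (forall t, 0 <= t <= 1 -> exists U V, is_derive u t U /\ is_derive v t V /\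
     Cmult (Cminus 1 (Cmult (RtoC t) w)) (U, V) = w) ->
  Cmult (Cexp (u 1, v 1)) (Cminus 1 w) = Cexp (u 0, v 0).
Proof.
  intros Hder. destruct w as [p q].
  assert (Hreal : forall t, 0 <= t <= 1 -> exists U V, is_derive u t U /\ is_derive v t V /\
            (1 - t * p) * U + t * q * V = p /\ (1 - t * p) * V - t * q * U = q).
  { intros t Ht. destruct (Hder t Ht) as [U [V [HU [HV E]]]].
    exists U, V. split; [exact HU | split; [exact HV |]].
    apply (f_equal fst) in E as E1. apply (f_equal snd) in E as E2. simpl in E1, E2.
    split; lra. }
  set (phi1 := fun t => (1 - t * p) * (exp (u t) * cos (v t)) + t * q * (exp (u t) * sin (v t))).
  set (phi2 := fun t => (1 - t * p) * (exp (u t) * sin (v t)) - t * q * (exp (u t) * cos (v t))).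
  assert (P1 : phi1 0 = phi1 1).
  { apply (eq_is_derive (V := R_NormedModule)); [| lra].
    intros t Ht. destruct (Hreal t Ht) as [U [V [HU [HV [E1 E2]]]]].
    unfold phi1. auto_derive; [repeat split; eexists; eassumption |].
    rewrite (is_derive_unique (fun x : R => u x) t U HU), (is_derive_unique (fun x : R => v x) t V HV).
    transitivity (exp (u t) * cos (v t) * ((1 - t * p) * U + t * q * V - p)
                  + exp (u t) * sin (v t) * (q - ((1 - t * p) * V - t * q * U))); [ring |].
    rewrite E1, E2. change (@zero R_NormedModule) with 0. ring. }
  assert (P2 : phi2 0 = phi2 1).
  { apply (eq_is_derive (V := R_NormedModule)); [| lra].
    intros t Ht. destruct (Hreal t Ht) as [U [V [HU [HV [E1 E2]]]]].
    unfold phi2. auto_derive; [repeat split; eexists; eassumption |].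
    rewrite (is_derive_unique (fun x : R => u x) t U HU), (is_derive_unique (fun x : R => v x) t V HV).
    transitivity (exp (u t) * sin (v t) * ((1 - t * p) * U + t * q * V - p)
                  + exp (u t) * cos (v t) * (((1 - t * p) * V - t * q * U) - q)); [ring |].
    rewrite E1, E2. change (@zero R_NormedModule) with 0. ring. }
  unfold phi1, phi2 in P1, P2.
  unfold Cexp, Re, Im. apply injective_projections; simpl; lra.
Qed.

Lemma Cexp_log_series w L : Cmod w < 1 ->
  @is_series C_AbsRing C_NormedModule (log_term w) L -> Cmult (Cexp L) (Cminus 1 w) = RtoC 1.
Proof.
  intros Hw HL.
  set (u := PSeries (log_coef fst w)). set (v := PSeries (log_coef snd w)).
  assert (Hfst_scal : forall (a : R) (c : C), fst (Cmult (RtoC a) c) = a * fst c) by (intros; simpl; ring).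
  assert (Hsnd_scal : forall (a : R) (c : C), snd (Cmult (RtoC a) c) = a * snd c) by (intros; simpl; ring).
  assert (Hsnd_le : forall c : C, Rabs (snd c) <= Cmod c).
  { intro c. pose proof (Rmax_Cmod c). pose proof (Rmax_r (Rabs (fst c)) (Rabs (snd c))). lra. }
  assert (EL : L = (u 1, v 1)).
  { unfold u, v. rewrite (PSeries_log_coef_1 fst Hfst_scal is_series_fst w L HL),
      (PSeries_log_coef_1 snd Hsnd_scal is_series_snd w L HL). now destruct L. }
  assert (E0 : (u 0, v 0) = RtoC 0) by (unfold u, v; now rewrite !PSeries_0).
  rewrite EL, Cexp_segment_const, E0; [apply Cexp_0 |].
  intros t Ht.
  assert (Htw : Cmod (Cmult (RtoC t) w) < 1).
  { rewrite Cmod_mult, Cmod_R, Rabs_pos_eq by lra. pose proof (Cmod_ge_0 w). nra. }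
  destruct (is_series_geom_C _ w Htw) as [rho [Hrho Erho]].
  exists (fst rho), (snd rho). split; [| split].
  - apply (is_derive_PSeries_log_coef fst Hfst_scal re_le_Cmod is_series_fst w Hw t rho Ht Hrho).
  - apply (is_derive_PSeries_log_coef snd Hsnd_scal Hsnd_le is_series_snd w Hw t rho Ht Hrho).
  - now destruct rho.
Qed.

Fixpoint log_partial (w : C) (N : nat) : C :=
  match N with O => RtoC 0 | S p => Cplus (log_partial w p) (log_term w p) end.

Lemma filterlim_log_partial w L : @is_series C_AbsRing C_NormedModule (log_term w) L ->
  filterlim (log_partial w) eventually (locally L).
Proof.
  intro HL. apply (filterlim_ext_loc (fun N => sum_n (log_term w) (pred N))).
  - exists 1%nat. intros [|N] HN; [lia |]. simpl pred. clear HN.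
    induction N as [|N IH].
    + rewrite sum_O. change (@eq C (log_term w 0) (Cplus 0 (log_term w 0))). ring.
    + now rewrite sum_Sn, IH.
  - eapply filterlim_comp; [| exact HL].
    intros P [N HN]. exists (S N). intros n Hn. apply HN. lia.
Qed.

Lemma div_succ_cases k M : (1 <= k)%nat ->
  (S M / k = M / k)%nat \/ (S M / k = S (M / k) /\ S M = k * S (M / k))%nat.
Proof.
  intro Hk. pose proof (Nat.div_mod M k ltac:(lia)) as HM.
  pose proof (Nat.mod_upper_bound M k ltac:(lia)) as Hb.
  destruct (Nat.eq_dec (S (M mod k)) k) as [E | E].
  - right. assert (ES : S M = (k * S (M / k))%nat) by lia.
    split; [| exact ES]. rewrite ES, Nat.mul_comm, Nat.div_mul by lia. reflexivity.
  - left. replace (S M) with (k * (M / k) + S (M mod k))%nat by lia. apply div_block. lia.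
Qed.

(* [hk_coef k] jumps by [1 / (M + 1)], minus [1 / q] when [M + 1 = k q]: these are the
   new terms of [L(z)] and [L(z^k)]. *)
Lemma hk_succ_mul_pow k z M : (1 <= k)%nat ->
  Cmult (hk k (S M)) (pow_n z (S M)) =
  Cplus (Cmult (hk k M) (pow_n z (S M)))
    (Cminus (log_term z M)
       (Cminus (log_partial (pow_n z k) (S M / k)) (log_partial (pow_n z k) (M / k)))).
Proof.
  intro Hk. unfold hk, hk_coef, log_term.
  change (harm (S M)) with (harm M + / INR (S M)).
  destruct (div_succ_cases k M Hk) as [E | [E ES]]; rewrite E.
  - rewrite !RtoC_minus, RtoC_plus. ring.
  - change (harm (S (M / k))) with (harm (M / k) + / INR (S (M / k))).
    simpl log_partial. unfold log_term. rewrite <- pow_n_mul, <- ES.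
    rewrite !RtoC_minus, !RtoC_plus. ring.
Qed.

Lemma hk_partial_sum k z M : (1 <= k)%nat ->
  Cmult (Cminus 1 z) (@sum_n C_AbelianGroup (fun m => Cmult (hk k m) (pow_n z m)) M) =
  Cminus (Cminus (Cplus (RtoC (- ln (INR k))) (log_partial z M)) (log_partial (pow_n z k) (M / k)))
    (Cmult (hk k M) (pow_n z (S M))).
Proof.
  intro Hk. induction M as [|M IH].
  - rewrite sum_O, Nat.Div0.div_0_l. unfold hk, hk_coef. rewrite Nat.Div0.div_0_l.
    simpl. change one with (RtoC 1). change (mult ?a ?b) with (Cmult a b).
    replace (0 - 0 - ln (INR k)) with (- ln (INR k)) by ring. ring.
  - rewrite sum_Sn. change (plus ?a ?b) with (Cplus a b). simpl log_partial.
    change (pow_n z (S (S M))) with (Cmult z (pow_n z (S M))).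
    replace (Cmult (hk k (S M)) (Cmult z (pow_n z (S M))))
      with (Cmult z (Cmult (hk k (S M)) (pow_n z (S M)))) by ring.
    rewrite Cmult_plus_distr_l, IH, (hk_succ_mul_pow k z M Hk). ring.
Qed.

Lemma geomC_mul_1_sub n z : (1 <= n)%nat -> Cmult (geomC n z) (Cminus 1 z) = Cminus 1 (pow_n z n).
Proof.
  intro Hn. unfold geomC. replace (pow_n z n) with (pow_n z (S (n - 1))) by (f_equal; lia).
  generalize (n - 1)%nat as N. induction N as [|N IH].
  - rewrite sum_O. simpl. change one with (RtoC 1). change (mult ?a ?b) with (Cmult a b). ring.
  - rewrite sum_Sn. change (plus ?a ?b) with (Cplus a b). rewrite Cmult_plus_distr_r, IH.
    change (pow_n z (S (S N))) with (Cmult z (pow_n z (S N))). ring.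
Qed.

Lemma is_eval_hk k z Lz Lk : (2 <= k)%nat -> Cmod z < 1 ->
  @is_series C_AbsRing C_NormedModule (log_term z) Lz ->
  @is_series C_AbsRing C_NormedModule (log_term (pow_n z k)) Lk ->
  exists s, is_eval (hk k) z s /\
    Cmult (Cminus 1 z) s = Cminus (Cplus (RtoC (- ln (INR k))) Lz) Lk.
Proof.
  intros Hk Hz HLz HLk.
  destruct (ex_eval_disk (hk k) z (inH2_hk k Hk) Hz) as [s Hs].
  exists s. split; [exact Hs |].
  apply (filterlim_locally_unique (F := eventually)
           (fun M => Cmult (Cminus 1 z) (sum_n (fun m => Cmult (hk k m) (pow_n z m)) M))).
  { apply filterlim_Cmult_l, Hs. }
  apply (filterlim_ext (fun M => Cminus (Cminus (Cplus (RtoC (- ln (INR k))) (log_partial z M))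
            (log_partial (pow_n z k) (M / k))) (Cmult (hk k M) (pow_n z (S M))))).
  { intro M. symmetry. apply hk_partial_sum. lia. }
  replace (Cminus (Cplus (RtoC (- ln (INR k))) Lz) Lk)
    with (Cminus (Cminus (Cplus (RtoC (- ln (INR k))) Lz) Lk) (RtoC 0)) by ring.
  apply filterlim_Cminus; [apply filterlim_Cminus; [apply filterlim_Cplus |] |].
  - apply filterlim_const.
  - exact (filterlim_log_partial z Lz HLz).
  - eapply filterlim_comp; [| exact (filterlim_log_partial _ Lk HLk)].
    intros P [N HN]. exists (k * N)%nat. intros M HM. apply HN.
    apply Nat.div_le_lower_bound; lia.
  - destruct (inH2_coef_bounded _ (inH2_hk k Hk)) as [B HB].
    apply (filterlim_C_0_bound _ (fun M => B * Cmod z * Cmod z ^ M)).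
    + intro M. rewrite Cmod_mult, Cmod_pow_n. change (Cmod z ^ S M) with (Cmod z * Cmod z ^ M).
      rewrite <- Rmult_assoc. apply Rmult_le_compat_r; [apply pow_le, Cmod_ge_0 |].
      apply Rmult_le_compat_r; [apply Cmod_ge_0 | apply HB].
    + pose proof (is_lim_seq_scal_l _ (B * Cmod z) _
        (is_lim_seq_geom (Cmod z) ltac:(rewrite Rabs_pos_eq; [exact Hz | apply Cmod_ge_0]))) as H.
      rewrite Rbar_mult_0_r in H. exact H.
Qed.

Lemma is_hk_hk k : (2 <= k)%nat -> is_hk k (hk k).
Proof.
  intro Hk. split; [now apply inH2_hk | split; [reflexivity |]].
  intros z Hz. unfold inDisk in Hz.
  assert (Hzk : Cmod (pow_n z k) < 1).
  { rewrite Cmod_pow_n. apply pow_lt_1_compat; [split; [apply Cmod_ge_0 | exact Hz] | lia]. }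
  destruct (ex_series_log_term z Hz) as [Lz HLz].
  destruct (ex_series_log_term (pow_n z k) Hzk) as [Lk HLk].
  destruct (is_eval_hk k z Lz Lk Hk Hz HLz HLk) as [s [Hs Es]].
  exists s. split; [exact Hs |].
  pose proof (Cexp_log_series z Lz Hz HLz) as ELz.
  pose proof (Cexp_log_series _ Lk Hzk HLk) as ELk.
  assert (ELk' : Cexp (Copp Lk) = Cminus 1 (pow_n z k)).
  { transitivity (Cmult (Cexp (Copp Lk)) (Cmult (Cexp Lk) (Cminus 1 (pow_n z k)))).
    - rewrite ELk. ring.
    - rewrite Cmult_assoc, Cexp_opp_mul. ring. }
  rewrite Es. unfold Cminus at 1. rewrite !Cexp_plus, Cexp_opp_ln, ELk', <- geomC_mul_1_sub
    by first [apply lt_0_INR; lia | lia].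
  transitivity (Cmult (Cmult (RtoC (/ INR k)) (geomC k z)) (Cmult (Cexp Lz) (Cminus 1 z))); [ring |].
  rewrite ELz. ring.
Qed.

(** * The orbit stays orthogonal to the [h_k] *)

Definition hk_comb (l : list (C * nat)) : seqC :=
  fun j => fold_right (fun t acc => Cplus (Cmult (fst t) (hk (snd t) j)) acc) (RtoC 0) l.

Definition in_hk_span (g : seqC) : Prop :=
  exists l : list (C * nat), (forall t, In t l -> (2 <= snd t)%nat) /\ forall j, g j = hk_comb l j.

Lemma in_hk_span_hk k : (2 <= k)%nat -> in_hk_span (hk k).
Proof.
  intro Hk. exists ((RtoC 1, k) :: nil). split.
  - intros t [<- | []]. exact Hk.
  - intro j. unfold hk_comb. simpl. ring.
Qed.

Lemma in_hk_span_inN g : in_hk_span g -> inN g.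
Proof.
  intros [l [Hl Hg]]. exists (map (fun t => (fst t, snd t, hk (snd t))) l). split.
  - intros c k a Hin. apply in_map_iff in Hin as [t [Ht Hin]]. injection Ht as <- <- <-.
    split; [| apply is_hk_hk]; apply Hl, Hin.
  - intro j. rewrite Hg. unfold hk_comb. clear. induction l as [|t l IH]; [reflexivity |].
    simpl. now rewrite IH.
Qed.

Lemma in_hk_span_inH2 g : in_hk_span g -> inH2 g.
Proof.
  intros [l [Hl Hg]]. apply (inH2_ext (hk_comb l)); [intro j; symmetry; apply Hg |].
  clear Hg. induction l as [|t l IH].
  - apply inH2_zero.
  - apply inH2_lincomb.
    + apply inH2_hk, Hl. now left.
    + apply IH. intros t' Ht'. apply Hl. now right.
Qed.

(* [W_n h_k = h_(n k) - h_n]. *)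
Lemma in_hk_span_W_seq n g : (2 <= n)%nat -> in_hk_span g -> in_hk_span (W_seq n g).
Proof.
  intros Hn [l [Hl Hg]].
  exists (flat_map (fun t => (fst t, (n * snd t)%nat) :: (Copp (fst t), n) :: nil) l). split.
  - intros t Ht. apply in_flat_map in Ht as [t0 [Ht0 Hin]].
    pose proof (Hl t0 Ht0). destruct Hin as [<- | [<- | []]]; simpl; nia.
  - intro m. unfold W_seq. rewrite Hg. unfold hk_comb. clear Hg.
    induction l as [|t l IH]; [reflexivity |]. simpl.
    rewrite <- IH by (intros t' Ht'; apply Hl; now right).
    assert (Hk : (2 <= snd t)%nat) by (apply Hl; now left).
    assert (E : hk (snd t) (m / n)%nat = Cminus (hk (n * snd t) m) (hk n m)).
    { unfold hk. rewrite <- hk_coef_mul by lia. apply RtoC_minus. }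
    rewrite E. ring.
Qed.

Lemma adjoint_orbit_orthogonal n (T : seqC -> seqC) (P : seqC -> Prop) f :
  (1 <= n)%nat -> is_adjoint_Wn n T ->
  (forall g, P g -> inH2 g) -> (forall g, P g -> P (W_seq n g)) ->
  inH2 f -> (forall g, P g -> is_inner g f (RtoC 0)) ->
  forall m, inH2 (Nat.iter m T f) /\ forall g, P g -> is_inner g (Nat.iter m T f) (RtoC 0).
Proof.
  intros Hn [HT_H2 HT_adj] HP_H2 HP_W Hf Hperp m.
  induction m as [|m [Hx Hx_perp]]; [split; assumption |].
  simpl. split; [now apply HT_H2 |].
  intros g Hg.
  destruct (HT_adj g (W_seq n g) (Nat.iter m T f) (HP_H2 g Hg) (W_rel_W_seq n g Hn (HP_H2 g Hg)) Hx)
    as [l [HWg HTx]].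
  now rewrite (is_series_C_unique _ _ _ HWg (Hx_perp _ (HP_W g Hg))) in HTx.
Qed.

(* [|x - y|^2 = |x|^2 + |y|^2 - 2 Re <y, x>]. *)
Lemma orthogonal_dist_sq_ge_coef (x y : seqC) s j :
  inH2 x -> is_inner y x (RtoC 0) ->
  is_series (fun i => Cmod (Cminus (x i) (y i)) ^ 2) s -> Cmod (y j) ^ 2 <= s.
Proof.
  intros [X HX] Hyx Hs.
  pose proof (is_series_fst _ _ Hyx) as Hre.
  assert (Hy : is_series (fun i => Cmod (y i) ^ 2) (s + - X + 2 * 0)).
  { apply (is_series_ext (fun i => plus (plus (Cmod (Cminus (x i) (y i)) ^ 2) (opp (Cmod (x i) ^ 2)))
                                       (scal 2 (fst (Cmult (y i) (Cconj (x i))))))).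
    - intro i. change (@eq R (Cmod (Cminus (x i) (y i)) ^ 2 + - Cmod (x i) ^ 2
                              + 2 * fst (Cmult (y i) (Cconj (x i)))) (Cmod (y i) ^ 2)).
      rewrite !Cmod2_alt. unfold Re, Im. simpl. ring.
    - apply (is_series_plus (V := R_NormedModule)); [apply (is_series_plus (V := R_NormedModule)) |].
      + exact Hs.
      + apply (is_series_opp (V := R_NormedModule)), HX.
      + apply (is_series_scal_l (V := R_NormedModule)), Hre. }
  pose proof (is_series_term_le _ (fun i => pow2_ge_0 _) _ j Hy).
  pose proof (is_series_term_le _ (fun i => pow2_ge_0 _) _ 0 HX).
  pose proof (pow2_ge_0 (Cmod (x 0%nat))). lra.
Qed.

Theorem mainTheorem18 :
  forall (n : nat), (2 <= n)%nat ->
  forall (Wstar : seqC -> seqC), is_adjoint_Wn n Wstar ->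
  forall f : seqC, ~ (inNperp f /\ HC Wstar f).
Proof.
  intros n Hn T HT f [[Hf Hperp] [_ Hdense]].
  assert (Horbit := adjoint_orbit_orthogonal n T in_hk_span f ltac:(lia) HT in_hk_span_inH2
    (fun g => in_hk_span_W_seq n g Hn) Hf (fun g Hg => Hperp g (in_hk_span_inN g Hg))).
  assert (Hln : 0 < ln (INR n)).
  { rewrite <- ln_1. apply ln_increasing; [lra | apply (lt_INR 1); lia]. }
  destruct (Hdense (hk n) (inH2_hk n Hn) (ln (INR n)) Hln) as [m [s [Hs Hsqrt]]].
  destruct (Horbit m) as [Hx Hx_perp].
  pose proof (orthogonal_dist_sq_ge_coef _ _ s 0 Hx (Hx_perp _ (in_hk_span_hk n Hn)) Hs) as Hdist.
  assert (Hhk0 : Cmod (hk n 0%nat) = ln (INR n)).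
  { unfold hk, hk_coef. rewrite Cmod_R, Nat.Div0.div_0_l. simpl harm.
    rewrite Rabs_left; lra. }
  rewrite Hhk0 in Hdist. apply sqrt_le_1_alt in Hdist.
  rewrite sqrt_pow2 in Hdist; lra.
Qed.
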